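(* Let $X$ be a toric Fano variety. If $\Sigma_X$ has two different primitive relations $x+y=z$ and $x+w=v$ (with $x,y,z,w,v\in G(\Sigma_X)$), then $w=-x-y$ and $v=-y$. Consequently there are at most two primitive collections of order $2$ and degree $1$ containing $x$, and if there are two, say $\{x,y\}$ and $\{x,w\}$, the associated primitive relations are $x+y=(-w)$ and $x+w=(-y)$.
   Context: $X$ is a smooth projective toric variety with ample anticanonical divisor, fan $\Sigma_X$, primitive ray generators $G(\Sigma_X)$. A primitive collection is a set of generators not spanning a cone of $\Sigma_X$ while every proper subset does; for $\{x_1,\dots,x_h\}$ with $x_1+\dots+x_h$ in the relative interior of the cone $\langle y_1,\dots,y_k\rangle$, the primitive relation is $x_1+\dots+x_h=a_1y_1+\dots+a_ky_k$ ($a_i$ positive integers) and the degree is $h-\sum a_i$. ''$x+y=z$ is a primitive relation'' means $\{x,y\}$ is a primitive collection with this relation. *)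

From HB Require Import structures.
From mathcomp Require Import all_boot all_order all_algebra.
Set Implicit Arguments. Unset Strict Implicit. Unset Printing Implicit Defensive.
Import Order.TTheory GRing.Theory Num.Theory.
Local Open Scope ring_scope.

(* The rays are indexed by a
   finite type T, with primitive generators g i : 'rV[int]_n.  Since a smooth
   fan is simplicial, each cone is determined by its set of rays; C is the set
   of (ray-index sets of) all cones of the fan. *)

Definition gq (n : nat) (T : finType) (g : T -> 'rV[int]_n) (i : T) : 'rV[rat]_n :=
  map_mx (fun z : int => z%:~R) (g i).

Definition in_cone (n : nat) (T : finType) (g : T -> 'rV[int]_n) (s : {set T})
  (v : 'rV[rat]_n) : Prop :=
  exists c : T -> rat, (forall i, 0 <= c i) /\ v = \sum_(i in s) c i *: gq g i.

Definition dotq (n : nat) (u v : 'rV[rat]_n) : rat := \sum_(k < n) u 0 k * v 0 k.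

Definition smooth_complete_fan (n : nat) (T : finType) (g : T -> 'rV[int]_n)
  (C : {set {set T}}) : Prop :=
  [/\ injective g,
      (forall i : T, [set i] \in C) /\
      (forall s t : {set T}, s \in C -> t \subset s -> t \in C),
      (* smoothness: the generators of each cone are part of a Z-basis of Z^n *)
      (forall s, s \in C -> exists M : 'M[int]_n,
           M \in unitmx /\ forall i, i \in s -> exists k, row k M = g i),
      (* fan axiom: two cones meet in a common face *)
      (forall s t v, s \in C -> t \in C -> in_cone g s v -> in_cone g t v ->
           in_cone g (s :&: t) v)
    &
      (forall v : 'rV[rat]_n, exists2 s, s \in C & in_cone g s v)].

(* -K_X = sum of all torus-invariant prime divisors is ample: its support
   function is strictly convex, i.e. for every maximal (n-dimensional) cone s
   there is m_s with <m_s, v_i> = 1 on the rays of s and < 1 on all other rays. *)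
Definition anticanonical_ample (n : nat) (T : finType) (g : T -> 'rV[int]_n)
  (C : {set {set T}}) : Prop :=
  forall s, s \in C -> #|s| = n ->
    exists u : 'rV[rat]_n,
      (forall i, i \in s -> dotq u (gq g i) = 1) /\
      (forall j, j \notin s -> dotq u (gq g j) < 1).

Definition toric_fano (n : nat) (T : finType) (g : T -> 'rV[int]_n)
  (C : {set {set T}}) : Prop :=
  smooth_complete_fan g C /\ anticanonical_ample g C.

Definition prim_coll (T : finType) (C : {set {set T}}) (P : {set T}) : Prop :=
  P \notin C /\ forall Q : {set T}, Q \proper P -> Q \in C.

(* primitive relation  sum_{i in P} x_i = sum_{j in t} a_j y_j  with the sum
   in the relative interior of the cone t (all a_j positive integers). *)
Definition prim_rel (n : nat) (T : finType) (g : T -> 'rV[int]_n)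
  (C : {set {set T}}) (P t : {set T}) (a : T -> nat) : Prop :=
  [/\ prim_coll C P, t \in C, (forall j, j \in t -> (0 < a j)%N)
    & \sum_(i in P) g i = \sum_(j in t) (a j)%:Z *: g j].

Definition prim_degree (T : finType) (P t : {set T}) (a : T -> nat) : int :=
  (#|P|%:Z - (\sum_(j in t) a j)%:Z)%R.

Definition prim_rel2 (n : nat) (T : finType) (g : T -> 'rV[int]_n)
  (C : {set {set T}}) (x y z : T) : Prop :=
  prim_rel g C [set x; y] [set z] (fun _ => 1%N).

Definition prim_coll_ord2_deg1 (n : nat) (T : finType) (g : T -> 'rV[int]_n)
  (C : {set {set T}}) (P : {set T}) : Prop :=
  #|P| = 2%N /\ exists t a, prim_rel g C P t a /\ prim_degree P t a = 1.

From HB Require Import structures.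
From mathcomp Require Import all_boot all_order all_algebra.
From mathcomp Require Import zify lra.
Set Implicit Arguments. Unset Strict Implicit. Unset Printing Implicit Defensive.
Import Order.TTheory GRing.Theory Num.Theory.
Local Open Scope ring_scope.

(* Write x + y = z and x + w = v.  The vector S = x + y + w then has the two
   decompositions z + w = y + v.  Writing S in a maximal cone with integer
   coefficients (smoothness), the anticanonical form of that cone takes the
   value 0, 1 or 2 on S: value 2 would put z, w, y, v in one cone and make the
   two decompositions coincide, so S is 0 or a generator t.  If S = t != 0, the
   triple (x, y, t) satisfies the hypotheses again, hence w, w + z, w + 2z, ...
   would all be generators, which is impossible.  That every cone lies in a
   maximal one, where the anticanonical form lives, follows from completeness
   and the fan axiom. *)

Definition ratv n (V : 'rV[int]_n) : 'rV[rat]_n := map_mx intr V.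

Lemma ratv_inj n : injective (@ratv n).
Proof.
move=> A B /matrixP eqAB; apply/matrixP => i j.
by have := eqAB i j; rewrite !mxE => /intr_inj.
Qed.

Lemma large_mulrn_ge0 (a b : int) (K : nat) :
  (`|b| < K)%N -> 0 <= a *+ K + b -> 0 <= a.
Proof. by rewrite -mulr_natr; nia. Qed.

Lemma large_mulrn_eq0 (a b : int) (K : nat) :
  (`|b| < K)%N -> a *+ K + b = 0 -> a = 0.
Proof. by rewrite -mulr_natr; nia. Qed.

Lemma mulrIn_row (R : numDomainType) n (V : 'rV[R]_n) :
  V != 0 -> injective (GRing.natmul V).
Proof.
move=> V0 m1 m2 eVm; have /existsP [j Vj] : [exists j, V 0 j != 0].
  apply: contraR V0 => /existsPn V0; apply/eqP/rowP => j.
  by have := V0 j; rewrite negbK mxE => /eqP.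
by apply: (mulrIn Vj); rewrite -!mulmxnE eVm.
Qed.

Section DotProduct.
Variables (n : nat) (u : 'rV[rat]_n).

Lemma dotqD V W : dotq u (V + W) = dotq u V + dotq u W.
Proof. by rewrite /dotq -big_split; apply: eq_bigr => j _; rewrite mxE mulrDr. Qed.

Lemma dotqMn V m : dotq u (V *+ m) = dotq u V *+ m.
Proof. by rewrite /dotq -sumrMnl; apply: eq_bigr => j _; rewrite mulmxnE mulrnAr. Qed.

Lemma dotq_sum (I : finType) (P : pred I) (F : I -> 'rV[rat]_n) :
  dotq u (\sum_(i | P i) F i) = \sum_(i | P i) dotq u (F i).
Proof.
rewrite /dotq exchange_big; apply: eq_bigr => j _.
by rewrite summxE mulr_sumr.
Qed.

End DotProduct.

Section Coordinates.
Variables (n : nat) (M : 'M[int]_n).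
Hypothesis unitM : M \in unitmx.

Definition coord (V : 'rV[rat]_n) : 'rV[rat]_n := V *m map_mx intr (invmx M).

Lemma coord_ratv V : coord (ratv V) = ratv (V *m invmx M).
Proof. by rewrite /coord /ratv map_mxM. Qed.

Lemma coord_row j : coord (ratv (row j M)) = delta_mx 0 j.
Proof.
rewrite coord_ratv -row_mul mulmxV //; apply/rowP => k.
by rewrite !mxE eqxx /= eq_sym; case: (k == j).
Qed.

Lemma coordD U V : coord (U + V) = coord U + coord V.
Proof. exact: mulmxDl. Qed.

Lemma coordK V : coord V *m map_mx intr M = V.
Proof. by rewrite /coord -mulmxA -map_mxM mulVmx // map_mx1 mulmx1. Qed.

End Coordinates.

Section Fan.
Variables (n : nat) (T : finType) (g : T -> 'rV[int]_n) (C : {set {set T}}).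
Hypothesis fan : smooth_complete_fan g C.

Lemma gen_inj : injective g.
Proof. by case: fan. Qed.

Lemma cone_set1 i : [set i] \in C.
Proof. by case: fan => _ []. Qed.

Definition chart (s : {set T}) M (k : T -> 'I_n) :=
  M \in unitmx /\ {in s, forall i, row (k i) M = g i}.

Lemma chart_exists s : s \in C -> exists M k, chart s M k.
Proof.
have [_ _ smooth _ _] := fan; move=> /smooth [M [unitM rowsM]].
have dim_pos (i : T) : (0 < n)%N.
  have [M' [_ /(_ i (set11 i)) [j _]]] := smooth _ (cone_set1 i).
  exact: leq_ltn_trans (ltn_ord j).
exists M, (fun i => odflt (Ordinal (dim_pos i)) [pick j | row j M == g i]).
split=> // i /rowsM [j rowj]; case: pickP => [j' /eqP //|/(_ j)].
by rewrite rowj eqxx.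
Qed.

Section Chart.
Variables (s : {set T}) (M : 'M[int]_n) (k : T -> 'I_n).
Hypothesis chartM : chart s M k.

Lemma chart_inj : {in s &, injective k}.
Proof.
case: chartM => _ rowsM i j si sj kij.
by apply: gen_inj; rewrite -rowsM // -[g j]rowsM // kij.
Qed.

Lemma coord_gen i : i \in s -> coord M (gq g i) = delta_mx 0 (k i).
Proof. by case: chartM => unitM rowsM si; rewrite -(coord_row unitM) rowsM. Qed.

Lemma coord_cone (c : T -> rat) j :
  coord M (\sum_(i in s) c i *: gq g i) 0 j = \sum_(i in s | k i == j) c i.
Proof.
rewrite /coord mulmx_suml summxE big_mkcondr /=; apply: eq_bigr => i si.
rewrite -scalemxAl mxE (_ : gq g i *m _ = coord M (gq g i)) // coord_gen //.
by rewrite !mxE eqxx /= eq_sym; case: (k i == j); rewrite ?mulr1 ?mulr0.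
Qed.

Lemma coord_cone_at (c : T -> rat) i : i \in s ->
  coord M (\sum_(i in s) c i *: gq g i) 0 (k i) = c i.
Proof.
move=> si; rewrite coord_cone (big_pred1 i) // => j /=.
by apply/andP/eqP => [[sj /eqP /(chart_inj sj si)] // | ->]; rewrite si.
Qed.

Lemma coord_cone_ge0 V j : in_cone g s V -> 0 <= coord M V 0 j.
Proof. by move=> [c [c_ge0 ->]]; rewrite coord_cone sumr_ge0. Qed.

Lemma coord_cone_out V j : j \notin k @: s -> in_cone g s V -> coord M V 0 j = 0.
Proof.
move=> nj [c [_ ->]]; rewrite coord_cone big1 // => i /andP [si /eqP kij].
by move: nj; rewrite -kij imset_f.
Qed.

Lemma cone_coef_unique (c d : T -> rat) :
  \sum_(i in s) c i *: gq g i = \sum_(i in s) d i *: gq g i -> {in s, c =1 d}.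
Proof. by move=> e i si; rewrite -(coord_cone_at c si) -(coord_cone_at d si) e. Qed.

End Chart.

Lemma gen_neq0 i : g i != 0.
Proof.
have [M [k chartM]] := chart_exists (cone_set1 i).
apply/eqP => gi0; have := coord_gen chartM (set11 i).
rewrite /gq gi0 map_mx0 /coord mul0mx => /matrixP/(_ 0 (k i)).
by rewrite !mxE !eqxx => /eqP; rewrite eq_sym oner_eq0.
Qed.

Lemma card_cone_le s : s \in C -> (#|s| <= n)%N.
Proof.
move=> /chart_exists [M [k chartM]].
by rewrite -(card_in_imset (chart_inj chartM)) -[X in (_ <= X)%N]card_ord max_card.
Qed.

Lemma in_cone_of_large_multiple t (p d : 'rV[int]_n) : t \in C ->
  exists B : nat, forall K, (B < K)%N ->
    in_cone g t (ratv (p *+ K + d)) -> in_cone g t (ratv p).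
Proof.
move=> /chart_exists [M [k chartM]]; have unitM := chartM.1.
pose a := p *m invmx M; pose b := d *m invmx M.
exists (\sum_(j < n) `|b 0%R j|)%N => K ltBK cone_pKd.
have lt_bK j : (`|b 0%R j| < K)%N.
  by apply: leq_ltn_trans ltBK; rewrite (bigD1 j) //= leq_addr.
have coord_pKd j : coord M (ratv (p *+ K + d)) 0 j = (a 0 j *+ K + b 0 j)%:~R.
  have pK : p *+ K *m invmx M = a *+ K by exact: (raddfMn (mulmxr (invmx M))).
  by rewrite coord_ratv mulmxDl pK /ratv !mxE mulmxnE !mxE.
have a_ge0 j : 0 <= a 0 j.
  apply: large_mulrn_ge0 (lt_bK j) _; rewrite -(ler0z rat) -coord_pKd.
  exact: coord_cone_ge0 chartM _ j cone_pKd.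
have a_out j : j \notin k @: t -> a 0 j = 0.
  move=> nj; apply: large_mulrn_eq0 (lt_bK j) _; apply: (@intr_inj rat).
  by rewrite -coord_pKd (coord_cone_out chartM nj cone_pKd).
exists (fun i => (a 0 (k i))%:~R); split=> [i|]; first by rewrite ler0z.
rewrite -(coordK unitM (ratv p)) coord_ratv mulmx_sum_row.
rewrite (bigID (mem (k @: t))) /= [X in _ + X]big1 ?addr0; last first.
  by move=> j /a_out aj0; rewrite mxE aj0 scale0r.
rewrite (eq_bigl (mem (k @: t))) // big_imset /=; last exact: chart_inj chartM.
apply: eq_bigr => i ti; rewrite mxE -map_row.
by case: chartM => _ ->.
Qed.

Lemma ratv_sum_gens (s : {set T}) : ratv (\sum_(i in s) g i) = \sum_(i in s) 1 *: gq g i.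
Proof. by rewrite /ratv raddf_sum; apply: eq_bigr => i _; rewrite scale1r. Qed.

Lemma cone_sub_of_sum_in_cone s t : s \in C -> t \in C ->
  in_cone g t (ratv (\sum_(i in s) g i)) -> s \subset t.
Proof.
move=> sC tC cone_t; have [M [k chartM]] := chart_exists sC.
have [_ _ _ fan_meet _] := fan.
have [c [_ sum_st]] : in_cone g (s :&: t) (ratv (\sum_(i in s) g i)).
  by apply: fan_meet cone_t => //; exists (fun=> 1); rewrite ratv_sum_gens.
have same_coefs : \sum_(i in s) 1 *: gq g i =
                  \sum_(i in s) (if i \in t then c i else 0) *: gq g i.
  rewrite -ratv_sum_gens sum_st big_mkcond [RHS]big_mkcond; apply: eq_bigr => i _.
  by rewrite inE; case: (i \in s); case: (i \in t); rewrite ?scale0r.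
apply/subsetP => i /(cone_coef_unique chartM same_coefs).
by case: (i \in t) => // /eqP; rewrite oner_eq0.
Qed.

Lemma cone_extend_proper s : s \in C -> (#|s| < n)%N ->
  exists2 t, t \in C & s \proper t.
Proof.
move=> sC lt_s_n; have [M [k chartM]] := chart_exists sC; have unitM := chartM.1.
have /subsetPn [j _ nj] : ~~ ([set: 'I_n] \subset k @: s).
  apply: contraL lt_s_n => /subset_leq_card.
  by rewrite cardsT card_ord (card_in_imset (chart_inj chartM)) -leqNgt.
(* p is interior to s and d points out of its span: for large K the cone
   containing p K + d contains p, hence all of s, but not d. *)
pose p := \sum_(i in s) g i; pose d := row j M.
have /fin_all_exists [B boundB] : forall t : {set T}, exists Bt : nat, t \in C ->
    forall K, (Bt < K)%N -> in_cone g t (ratv (p *+ K + d)) -> in_cone g t (ratv p).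
  move=> t; case: (boolP (t \in C)) => [tC|]; last by exists 0%N.
  by have [Bt boundBt] := in_cone_of_large_multiple p d tC; exists Bt.
pose K := (\max_t B t).+1.
have [_ _ _ _ complete] := fan; have [t tC cone_pKd] := complete (ratv (p *+ K + d)).
exists t; rewrite // properEneq cone_sub_of_sum_in_cone ?andbT //; last first.
  by apply: boundB cone_pKd => //; rewrite ltnS leq_bigmax.
have coord_pKd : coord M (ratv (p *+ K + d)) = coord M (ratv p) *+ K + delta_mx 0 j.
  rewrite -(coord_row unitM) /coord /ratv raddfD raddfMn mulmxDl; congr (_ + _).
  exact: (raddfMn (mulmxr _)).
have cone_p : in_cone g s (ratv p) by exists (fun=> 1); rewrite ratv_sum_gens.
apply/eqP => st; move: cone_pKd; rewrite -st => /(coord_cone_out chartM nj) /eqP.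
rewrite coord_pKd mxE mulmxnE (coord_cone_out chartM nj cone_p) mul0rn add0r.
by rewrite mxE !eqxx oner_eq0.
Qed.

Lemma cone_extend s0 : s0 \in C -> exists2 s, s \in C & s0 \subset s /\ #|s| = n.
Proof.
move=> s0C.
have [|s /andP [sC s0s] smax] :=
  @arg_maxnP _ s0 [pred s | (s \in C) && (s0 \subset s)] (fun s => #|s|).
  by rewrite /= s0C subxx.
exists s => //; split => //; apply/eqP; rewrite eqn_leq card_cone_le //= leqNgt.
apply/negP => /(cone_extend_proper sC) [t tC st].
move: (smax t); rewrite /= tC (subset_trans s0s (proper_sub st)) => /(_ isT).
by rewrite leqNgt proper_card.
Qed.

End Fan.

Section Fano.
Variables (n : nat) (T : finType) (g : T -> 'rV[int]_n) (C : {set {set T}}).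
Hypothesis fano : toric_fano g C.
Let fan : smooth_complete_fan g C := fano.1.

Definition anticanonical_form (s : {set T}) (u : 'rV[rat]_n) :=
  (forall i, i \in s -> dotq u (gq g i) = 1) /\
  (forall j, j \notin s -> dotq u (gq g j) < 1).

Definition is_gen (V : 'rV[int]_n) := exists i, g i = V.

Section AnticanonicalForm.
Variables (s : {set T}) (u : 'rV[rat]_n).
Hypothesis form_u : anticanonical_form s u.

Lemma form_le1 i : dotq u (gq g i) <= 1.
Proof.
case: form_u => form_in form_out.
by case: (boolP (i \in s)) => [/form_in -> | /form_out /ltW].
Qed.

Lemma form_sum2 a b : dotq u (gq g a + gq g b) = 2 -> a \in s /\ b \in s.
Proof.
case: form_u => _ form_out; rewrite dotqD => form_ab.
have := form_le1 a; have := form_le1 b.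
by split; apply: contraT => /form_out; lra.
Qed.

End AnticanonicalForm.

Lemma max_cone_form s0 : s0 \in C ->
  exists s u, [/\ s \in C, s0 \subset s & anticanonical_form s u].
Proof.
move=> /(cone_extend fan) [s sC [s0s card_s]].
by have [u form_u] := fano.2 s sC card_s; exists s, u.
Qed.

Lemma lattice_in_max_cone V : exists s u (m : T -> nat),
  [/\ s \in C, anticanonical_form s u & V = \sum_(i in s) g i *+ m i].
Proof.
have [_ _ _ _ complete] := fan.
have [s0 s0C [c [c_ge0 Vc]]] := complete (ratv V).
have [s [u [sC s0s form_u]]] := max_cone_form s0C.
have [M [k chartM]] := chart_exists fan sC.
pose m i := `|(V *m invmx M) 0%R (k i)|%N.
exists s, u, m; split=> //; apply: ratv_inj.
pose c' i := if i \in s0 then c i else 0.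
have Vc' : ratv V = \sum_(i in s) c' i *: gq g i.
  rewrite Vc big_mkcond [RHS]big_mkcond; apply: eq_bigr => i _; rewrite /c'.
  by case: (boolP (i \in s0)) => [/(subsetP s0s) -> | _]; rewrite ?scale0r ?if_same.
have c'_nat i : i \in s -> c' i = (m i)%:R.
  move=> si; have c'_ge0 : 0 <= c' i by rewrite /c'; case: ifP.
  move: c'_ge0; rewrite -(coord_cone_at fan chartM c' si) -Vc' coord_ratv mxE ler0z.
  by rewrite /m; move=> /gez0_abs {1}<-.
rewrite Vc' /ratv raddf_sum; apply: eq_bigr => i si.
by rewrite c'_nat // scaler_nat raddfMn.
Qed.

Lemma form_lattice s u (m : T -> nat) : anticanonical_form s u ->
  dotq u (ratv (\sum_(i in s) g i *+ m i)) = (\sum_(i in s) m i)%:R.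
Proof.
case=> form_in _; rewrite /ratv raddf_sum dotq_sum natr_sum.
by apply: eq_bigr => i si; rewrite raddfMn dotqMn form_in.
Qed.

Lemma sum2_cases a b :
  [\/ g a + g b = 0, is_gen (g a + g b) |
      exists2 s, s \in C & a \in s /\ b \in s].
Proof.
have [s [u [m [sC form_u abm]]]] := lattice_in_max_cone (g a + g b).
have form_ab : dotq u (gq g a + gq g b) = (\sum_(i in s) m i)%:R.
  by rewrite -(form_lattice m form_u) -abm /ratv raddfD.
have : (\sum_(i in s) m i <= 2)%N.
  rewrite -(ler_nat rat) -form_ab dotqD.
  by have := form_le1 form_u a; have := form_le1 form_u b; lra.
rewrite leq_eqVlt ltnS leq_eqVlt ltnS leqn0 => /or3P [N2 | N1 | N0].
- by constructor 3; exists s => //; apply: (form_sum2 form_u); rewrite form_ab (eqP N2).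
- constructor 2; have /sum_nat_eq1 [i [si mi1 m0]] := N1; exists i.
  rewrite abm (bigD1 i) //= big1 ?addr0 ?mi1 // => j /andP [sj ji].
  by rewrite m0.
- constructor 1; rewrite abm big1 // => i si.
  by move: N0; rewrite sum_nat_eq0 => /forall_inP /(_ i si) /eqP ->.
Qed.

Lemma sum_cone_eq s a b c d : s \in C -> c \in s -> d \in s ->
  g a + g b = g c + g d -> a = c \/ a = d.
Proof.
move=> /max_cone_form [s' [u [s'C /subsetP ss' form_u]]] /ss' s'c /ss' s'd abcd.
have gqE i j : gq g i + gq g j = ratv (g i + g j) by rewrite /ratv raddfD.
have [s'a s'b] : a \in s' /\ b \in s'.
  apply: (form_sum2 form_u); rewrite gqE abcd -gqE dotqD.
  by case: form_u => form_in _; rewrite !form_in.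
have [M [k chartM]] := chart_exists fan s'C; have kI := chart_inj fan chartM.
have := congr1 (fun V => coord M (ratv V) 0 (k a)) abcd; rewrite /= -!gqE !coordD.
rewrite !(coord_gen chartM) // !mxE !eqxx /= !(inj_in_eq kI) //.
case: (eqVneq c a) => [->|_]; first by left.
case: (eqVneq d a) => [->|_]; first by right.
by move=> coord_ka; exfalso; move: coord_ka; case: (a == b) => /=; lra.
Qed.

Lemma double_gen_eq a b t : g a + g b = g t + g t -> a = t.
Proof. by move=> /(sum_cone_eq (cone_set1 fan t) (set11 t) (set11 t)) []. Qed.

Lemma sum3_addl_neq0 a b d t : b != d -> g t = g a + g b + g d -> g a + g t != 0.
Proof.
move=> bd tabd; apply: contra_neq bd => /eqP; rewrite addr_eq0 => /eqP ga.
have bdt : g b + g d = g t + g t.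
  by move: tabd; rewrite ga -addrA => /(congr1 (+%R (g t))); rewrite addNKr.
by rewrite (double_gen_eq bdt) (double_gen_eq (etrans (addrC _ _) bdt)).
Qed.

Lemma gen_addl_neq a b : g a + g b != g b.
Proof. by rewrite -subr_eq0 addrK (gen_neq0 fan). Qed.

Lemma sum3_is_gen x y w : is_gen (g x + g y) -> is_gen (g x + g w) -> y != w ->
  g x + g y + g w != 0 -> is_gen (g x + g y + g w).
Proof.
move=> [z xyz] [v xwv] yw; rewrite -xyz.
have zwyv : g z + g w = g y + g v by rewrite xyz xwv addrCA addrA.
case: (sum2_cases z w) => [-> | // | [s sC [sz sw]]]; first by rewrite eqxx.
case: (sum_cone_eq sC sz sw (esym zwyv)) => [yz | ywe]; last by rewrite ywe eqxx in yw.
by move: xyz; rewrite yz => /esym/eqP; rewrite (negbTE (gen_addl_neq x z)).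
Qed.

Lemma shift_gen x y w : is_gen (g x + g y) -> is_gen (g x + g w) -> y != w ->
  g x + g y + g w != 0 ->
  exists w', [/\ g w' = g w + (g x + g y), is_gen (g x + g w'), y != w'
               & g x + g y + g w' != 0].
Proof.
move=> xy_gen [v xwv] yw S0.
have [t txyw] := sum3_is_gen xy_gen (ex_intro _ v xwv) yw S0.
have xv : x != v by apply/eqP => xv; have := gen_addl_neq w x; rewrite addrC -xwv xv eqxx.
have yvt : g t = g y + g v by rewrite txyw xwv addrCA addrA.
have yxv_xt : g y + g x + g v = g x + g t by rewrite (addrC (g y)) -addrA yvt.
have yx_gen : is_gen (g y + g x) by rewrite addrC.
have yv_gen : is_gen (g y + g v) by exists t.
have yxv_neq0 : g y + g x + g v != 0 by rewrite yxv_xt (sum3_addl_neq0 yw txyw).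
have [t' t'yxv] := sum3_is_gen yx_gen yv_gen xv yxv_neq0.
exists t; split.
- by rewrite txyw addrC.
- by exists t'; rewrite t'yxv yxv_xt.
- by apply/eqP => yt; have := gen_addl_neq v y; rewrite xwv addrAC -txyw yt eqxx.
- have -> : g x + g y + g t = g y + g t' by rewrite t'yxv yxv_xt addrA (addrC (g y)).
  exact: sum3_addl_neq0 xv t'yxv.
Qed.

Lemma sum3_eq0 x y w : is_gen (g x + g y) -> is_gen (g x + g w) -> y != w ->
  g x + g y + g w = 0.
Proof.
move=> xy_gen xw_gen yw; apply/eqP; apply: contraT => S0; have [z xyz] := xy_gen.
have orbit m : exists w', g w' = g w + g z *+ m /\
    [/\ is_gen (g x + g w'), y != w' & g x + g y + g w' != 0].
  elim: m => [|m [w' [w'E [xw'_gen yw' S'0]]]]; first by exists w; rewrite addr0.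
  have [w'' [w''E xw''_gen yw'' S''0]] := shift_gen xy_gen xw'_gen yw' S'0.
  by exists w''; split; rewrite // w''E w'E -xyz mulrSr addrA.
have [f orbit_f] := fin_all_exists (fun m : 'I_#|T|.+1 => orbit m).
have f_inj : injective f.
  move=> i j fij; apply/ord_inj/(mulrIn_row (gen_neq0 fan z))/(@addrI _ (g w)).
  by rewrite -(orbit_f i).1 -(orbit_f j).1 fij.
by have := leq_card f f_inj; rewrite card_ord ltnn.
Qed.

End Fano.

Lemma card2_set2 (T : finType) (P : {set T}) x :
  x \in P -> #|P| = 2%N -> exists y, P = [set x; y].
Proof.
move=> xP /eqP/cards2P [a [b [_ Pab]]]; move: xP; rewrite Pab !inE.
by case/orP => /eqP ->; [exists b | exists a; rewrite setUC].
Qed.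

Section PrimitiveRelations.
Variables (n : nat) (T : finType) (g : T -> 'rV[int]_n) (C : {set {set T}}).
Hypothesis fano : toric_fano g C.
Let fan : smooth_complete_fan g C := fano.1.

Lemma prim_rel2_sum x y z : prim_rel2 g C x y z -> g x + g y = g z.
Proof.
move=> [[xy_notC _] _ _]; rewrite big_set1 scale1r => <-.
have xy : x != y by apply: contraNneq xy_notC => ->; rewrite setUid (cone_set1 fan).
by rewrite big_setU1 ?inE // big_set1.
Qed.

Lemma prim_rel2_pair x y z w v : prim_rel2 g C x y z -> prim_rel2 g C x w v ->
  y != w -> g w = - g x - g y /\ g v = - g y.
Proof.
move=> xyz xwv yw; have gen_sum a b c : prim_rel2 g C a b c -> is_gen g (g a + g b).
  by move/prim_rel2_sum => abc; exists c.
have /eqP := sum3_eq0 fano (gen_sum _ _ _ xyz) (gen_sum _ _ _ xwv) yw.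
rewrite addrC addr_eq0 => /eqP gw.
by rewrite -(prim_rel2_sum xwv) gw opprD addNKr.
Qed.

Lemma prim_deg1_rel2 x y :
  prim_coll_ord2_deg1 g C [set x; y] -> exists z, prim_rel2 g C x y z.
Proof.
move=> [card2 [t [a [[prim tC a_gt0 sum_a] deg1]]]].
have /eqP/sum_nat_eq1 [z [zt az1 a0]] : (\sum_(j in t) a j = 1)%N.
  by move: deg1; rewrite /prim_degree card2; lia.
have tz : t = [set z].
  apply/setP => j; rewrite inE; apply/idP/eqP => [jt | -> //].
  by apply/eqP; apply: contraTT (a_gt0 j jt) => jz; rewrite a0.
exists z; split=> //; first by rewrite -tz.
by rewrite sum_a tz !big_set1 az1.
Qed.

Lemma prim_deg1_pair_eq x y1 y2 y3 :
  prim_coll_ord2_deg1 g C [set x; y1] -> prim_coll_ord2_deg1 g C [set x; y2] ->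
  prim_coll_ord2_deg1 g C [set x; y3] -> [\/ y1 = y2, y1 = y3 | y2 = y3].
Proof.
move=> /prim_deg1_rel2 [z1 r1] /prim_deg1_rel2 [z2 r2] /prim_deg1_rel2 [z3 r3].
case: (eqVneq y1 y2) => [|y12]; first by constructor 1.
case: (eqVneq y1 y3) => [|y13]; first by constructor 2.
have [g2 _] := prim_rel2_pair r1 r2 y12; have [g3 _] := prim_rel2_pair r1 r3 y13.
by constructor 3; apply: (gen_inj fan); rewrite g2 g3.
Qed.

End PrimitiveRelations.

Theorem lemma2p3 (n : nat) (T : finType) (g : T -> 'rV[int]_n)
  (C : {set {set T}}) :
  toric_fano g C ->
  (forall x y z w v : T,
     prim_rel2 g C x y z -> prim_rel2 g C x w v -> y != w ->
     g w = - g x - g y /\ g v = - g y) /\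
  (forall (x : T) (P1 P2 P3 : {set T}),
     x \in P1 -> x \in P2 -> x \in P3 ->
     prim_coll_ord2_deg1 g C P1 -> prim_coll_ord2_deg1 g C P2 ->
     prim_coll_ord2_deg1 g C P3 ->
     [\/ P1 = P2, P1 = P3 | P2 = P3]) /\
  (forall x y w : T, y != w ->
     prim_coll_ord2_deg1 g C [set x; y] -> prim_coll_ord2_deg1 g C [set x; w] ->
     (exists2 u, g u = - g w & prim_rel2 g C x y u) /\
     (exists2 u, g u = - g y & prim_rel2 g C x w u)).
Proof.
move=> fano; split; first exact: prim_rel2_pair.
split=> [x P1 P2 P3 xP1 xP2 xP3 d1 d2 d3 | x y w yw d1 d2].
  have [y1 P1E] := card2_set2 xP1 d1.1; have [y2 P2E] := card2_set2 xP2 d2.1.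
  have [y3 P3E] := card2_set2 xP3 d3.1; rewrite P1E P2E P3E in d1 d2 d3 *.
  by case: (prim_deg1_pair_eq fano d1 d2 d3) => ->; constructor.
have [[z xyz] [v xwv]] := (prim_deg1_rel2 d1, prim_deg1_rel2 d2).
have [gw gv] := prim_rel2_pair fano xyz xwv yw.
split; [exists z => // | by exists v].
by rewrite gw opprD !opprK (prim_rel2_sum fano xyz).
Qed.
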